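(* Let $(N,\langle\cdot,\cdot\rangle,\varphi)$ be a modified $H$-type group (see context), with $m=\dim\mathfrak v$. The Ricci operator $\mathrm{Rc}$ preserves the splitting $\mathfrak n=\mathfrak z\oplus\mathfrak v$, and $$\mathrm{Rc}|_{\mathfrak v}=-\tfrac{\xi}{2}\,\mathrm{Id}_{\mathfrak v},\qquad \mathrm{Rc}|_{\mathfrak z}=\tfrac m4\,\mathrm{Id}^\dagger_\varphi .$$
   Context: Let $N$ be a 2-step nilpotent real Lie group with Lie algebra $\mathfrak n$, Lie bracket $[\cdot,\cdot]$ and center $\mathfrak z$, endowed with a left-invariant pseudo-Riemannian metric $\langle\cdot,\cdot\rangle$ (identified with an inner product on $\mathfrak n$) for which $\mathfrak z$ is nondegenerate. Put $\mathfrak v=\mathfrak z^\perp$. For $z\in\mathfrak z$ define $j(z)\in\mathrm{End}(\mathfrak v)$ by $\langle [x,y],z\rangle=\langle y,j(z)x\rangle$ for all $x,y\in\mathfrak v$. Given a quadratic form $\varphi$ on $\mathfrak z$, $(N,\langle\cdot,\cdot\rangle,\varphi)$ is a modified $H$-type group if $j(z)^2=-\varphi(z)\,\mathrm{Id}_{\mathfrak v}$ for all $z\in\mathfrak z$. $\langle\cdot,\cdot\rangle_\varphi$ is the polarization of $\varphi$. With $\{z_1,\dots,z_p\}$ a pseudo-orthonormal basis of $\mathfrak z$, $\xi=\sum_{k}\langle z_k,z_k\rangle\varphi(z_k)$. The Ricci operator $\mathrm{Rc}:\mathfrak n\to\mathfrak n$ is defined by $\langle \mathrm{Rc}\,x,y\rangle=\mathrm{Ric}(x,y)$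 for all $x,y\in\mathfrak n$. The operator $\mathrm{Id}^\dagger_\varphi:\mathfrak z\to\mathfrak z$ is defined by $\langle \mathrm{Id}^\dagger_\varphi z,z'\rangle=\langle z,z'\rangle_\varphi$ for all $z,z'\in\mathfrak z$. *)

(* The Lie algebra n is modelled as R^n = 'rV[R]_n with a
   bracket given as a function; the left-invariant pseudo-Riemannian metric is
   the symmetric nondegenerate Gram matrix G; all curvature quantities of the
   left-invariant metric are computed algebraically on the Lie algebra. *)
From HB Require Import structures.
From mathcomp Require Import all_boot all_order all_algebra.
Set Implicit Arguments. Unset Strict Implicit. Unset Printing Implicit Defensive.
Import Order.TTheory GRing.Theory Num.Theory.
Local Open Scope ring_scope.

Section Defs.
Variables (R : realFieldType) (n : nat).
Variable (G : 'M[R]_n).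
Variable (br : 'rV[R]_n -> 'rV[R]_n -> 'rV[R]_n).

Definition ev (i : 'I_n) : 'rV[R]_n := delta_mx 0 i.

Definition ip (x y : 'rV[R]_n) : R := (x *m G *m y^T) 0 0.

Definition center (x : 'rV[R]_n) : Prop := forall y, br x y = 0.

Definition in_v (x : 'rV[R]_n) : Prop := forall z, center z -> ip x z = 0.

Definition koszul (x y w : 'rV[R]_n) : R :=
  (ip (br x y) w - ip (br y w) x + ip (br w x) y) / 2%:R.

(* Levi-Civita connection nabla_x y, determined by <nabla_x y, e_j> = koszul *)
Definition LC (x y : 'rV[R]_n) : 'rV[R]_n :=
  (\row_j koszul x y (ev j)) *m invmx G.

Definition curv (x y w : 'rV[R]_n) : 'rV[R]_n :=
  LC x (LC y w) - LC y (LC x w) - LC (br x y) w.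

Definition ric (x y : 'rV[R]_n) : R := \sum_i (curv (ev i) x y) 0 i.

(* Ricci operator: <Rc x, y> = Ric(x,y) *)
Definition Rc (x : 'rV[R]_n) : 'rV[R]_n := (\row_j ric x (ev j)) *m invmx G.

End Defs.

Definition polar (R : realFieldType) (n : nat) (phi : 'rV[R]_n -> R)
  (z z' : 'rV[R]_n) : R := (phi (z + z') - phi z - phi z') / 2%:R.

(* The identity <[u,t], c> = <t, j(c) u> extends j to a bilinear map [jext] on all of n
   (namely j(c_z) u_v), and the Koszul formula becomes
     nabla_u w = ([u,w] - j(u) w - j(w) u) / 2.
   Expanding the curvature and taking the trace in the first slot, each of the eleven
   terms is the trace of a map that is skew, or adjoint to a map with values in z that
   kills z, or has values in z and is computed on the pseudo-orthonormal basis (z_k)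
   of z.  What survives is
     Ric(b,c) = - tr(j(b) j(c)) / 4 - (sum_k <z_k,z_k> <j(z_k) b, j(z_k) c>) / 2.
   On v the first term vanishes and j(z_k)^2 = - phi(z_k) turns the second one into
   - xi <b,c> / 2.  On z the second term vanishes, and polarizing the H-type identity
   gives j(z) j(z') + j(z') j(z) = - 2 <z,z'>_phi on v, whence
   tr(j(z) j(z')) = - m <z,z'>_phi. *)

From HB Require Import structures.
From mathcomp Require Import all_boot all_order all_algebra.
From mathcomp Require Import ring.
Set Implicit Arguments.
Unset Strict Implicit.
Unset Printing Implicit Defensive.
Import Order.TTheory GRing.Theory Num.Theory.
Local Open Scope ring_scope.

Lemma linear_combination_of (R : pzRingType) (U V : lmodType R) (A : U -> V)
    (I : Type) (r : seq I) (P : pred I) (c : I -> R) (E : I -> U) :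
  linear A -> A (\sum_(i <- r | P i) c i *: E i) = \sum_(i <- r | P i) c i *: A (E i).
Proof.
move=> linA; pose A' : {linear U -> V} := HB.pack A (GRing.isLinear.Build _ _ _ _ A linA).
by rewrite -[A]/(A' : U -> V) linear_sum; apply: eq_bigr => i _; rewrite linearZ.
Qed.

Lemma scalar_combination_of (R : comPzRingType) (U : lmodType R) (f : U -> R)
    (I : Type) (r : seq I) (P : pred I) (c : I -> R) (E : I -> U) :
  scalar f -> f (\sum_(i <- r | P i) c i *: E i) = \sum_(i <- r | P i) c i * f (E i).
Proof.
move=> f_scalar; pose f' : {scalar U} := HB.pack f (GRing.isLinear.Build _ _ _ _ f f_scalar).
by rewrite -[f]/(f' : U -> R) linear_sum; apply: eq_bigr => i _; rewrite linearZ.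
Qed.

Lemma ip_is_bilinear (R : realFieldType) n (G : 'M[R]_n) :
  (forall y, scalar (ip G ^~ y)) * (forall x, scalar (ip G x)).
Proof.
split=> [y|x] a u v; rewrite /ip; first by rewrite !mulmxDl -!scalemxAl !mxE.
by rewrite linearP /= !mulmxDr -!scalemxAr !mxE.
Qed.

HB.instance Definition _ (R : realFieldType) n (G : 'M[R]_n) :=
  bilinear_isBilinear.Build R _ _ _ _ _ (ip G) (ip_is_bilinear G).

Section Trace.
Variables (R : realFieldType) (n : nat).
Implicit Types (A B F : 'rV[R]_n -> 'rV[R]_n) (x : 'rV[R]_n).

Definition ftrace F := \sum_i (F (ev R i)) 0 i.

Lemma linear_coord A x i :
  linear A -> (A x) 0 i = \sum_l x 0 l * (A (ev R l)) 0 i.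
Proof.
move=> linA; rewrite {1}(row_sum_delta x) linear_combination_of // summxE.
by apply: eq_bigr => l _; rewrite mxE.
Qed.

Lemma ftrace_comm A B : linear A -> linear B -> ftrace (A \o B) = ftrace (B \o A).
Proof.
move=> linA linB; rewrite /ftrace /=.
under eq_bigr => i _ do rewrite (linear_coord _ _ linA).
under [RHS]eq_bigr => i _ do rewrite (linear_coord _ _ linB).
by rewrite exchange_big; apply: eq_bigr => i _; apply: eq_bigr => l _; rewrite mulrC.
Qed.

Lemma ftraceD F1 F2 : ftrace (fun x => F1 x + F2 x) = ftrace F1 + ftrace F2.
Proof. by rewrite /ftrace -big_split; apply: eq_bigr => i _; rewrite mxE. Qed.

Lemma ftraceN F : ftrace (fun x => - F x) = - ftrace F.
Proof. by rewrite /ftrace -sumrN; apply: eq_bigr => i _; rewrite mxE. Qed.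

Lemma ftraceZ a F : ftrace (fun x => a *: F x) = a * ftrace F.
Proof. by rewrite /ftrace mulr_sumr; apply: eq_bigr => i _; rewrite mxE. Qed.

Lemma ftrace_proj m (vb : 'I_m -> 'rV[R]_n) A : linear A ->
    (forall c : 'I_m -> R, \sum_k c k *: vb k = 0 -> forall k, c k = 0) ->
    (forall k, A (vb k) = vb k) ->
    (forall x, exists c : 'I_m -> R, A x = \sum_k c k *: vb k) ->
  ftrace A = m%:R.
Proof.
move=> linA vb_free A_vb A_span.
have [C AC] : exists C : 'I_n -> 'I_m -> R, forall i, A (ev R i) = \sum_k C i k *: vb k.
  exact: (fin_all_exists (fun i => A_span (ev R i))).
have dualC l k : \sum_i vb l 0 i * C i k = (l == k)%:R.
  have sum_delta : \sum_k (l == k)%:R *: vb k = vb l.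
    rewrite (bigD1 l) //= eqxx scale1r big1 ?addr0 // => k'.
    by rewrite eq_sym => /negPf ->; rewrite scale0r.
  have A_vbl : \sum_k (\sum_i vb l 0 i * C i k) *: vb k = \sum_k (l == k)%:R *: vb k.
    rewrite sum_delta -{2}A_vb {2}(row_sum_delta (vb l)) linear_combination_of //.
    under [RHS]eq_bigr => i _ do rewrite AC scaler_sumr.
    rewrite exchange_big; apply: eq_bigr => k' _ /=; rewrite scaler_suml.
    by apply: eq_bigr => i _; rewrite scalerA.
  apply/eqP; rewrite -subr_eq0; apply/eqP; move: k; apply: vb_free.
  by under eq_bigr => k _ do rewrite scalerBl; rewrite sumrB A_vbl subrr.
rewrite /ftrace; under eq_bigr => i _ do rewrite AC summxE.
under eq_bigr => i _ do under eq_bigr => k _ do rewrite mxE mulrC.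
rewrite exchange_big (eq_bigr (fun _ => 1)) ?sumr_const ?card_ord // => k _.
by rewrite dualC eqxx.
Qed.

End Trace.

Section Gram.
Variables (R : realFieldType) (n : nat) (G : 'M[R]_n).
Hypotheses (G_sym : G^T = G) (G_unit : G \in unitmx).
Implicit Types (A B : 'rV[R]_n -> 'rV[R]_n) (f : 'rV[R]_n -> R) (x y t : 'rV[R]_n).

Lemma ipC x y : ip G x y = ip G y x.
Proof.
rewrite /ip; have -> : x *m G *m y^T = (y *m G *m x^T)^T.
  by rewrite !trmx_mul !trmxK G_sym mulmxA.
by rewrite mxE.
Qed.

Lemma ip_ev x i : ip G x (ev R i) = (x *m G) 0 i.
Proof. by rewrite /ip /ev trmx_delta -colE mxE. Qed.

Lemma ip_dual x i : ip G x (ev R i *m invmx G) = x 0 i.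
Proof.
rewrite /ip trmx_mul trmx_inv G_sym mulmxA (mulmxK G_unit).
by rewrite /ev trmx_delta -colE mxE.
Qed.

Lemma ip_nondeg x y : (forall t, ip G x t = ip G y t) -> x = y.
Proof.
move=> ipxy; rewrite -(mulmxK G_unit x) -(mulmxK G_unit y); congr (_ *m _).
by apply/rowP => i; rewrite -!ip_ev.
Qed.

Lemma ip_coord x y : ip G x y = \sum_i x 0 i * ip G (ev R i) y.
Proof.
rewrite {1}(row_sum_delta x) linear_sumlz; apply: eq_bigr => i _.
by rewrite linearZl_LR.
Qed.

Definition riesz f := (\row_k f (ev R k)) *m invmx G.

Lemma ip_riesz f t : scalar f -> ip G (riesz f) t = f t.
Proof.
move=> f_scalar; rewrite /ip (mulmxKV G_unit) mxE [in RHS](row_sum_delta t).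
rewrite scalar_combination_of //; apply: eq_bigr => k _.
by rewrite !mxE mulrC.
Qed.

Lemma riesz_ip f y : (forall t, f t = ip G y t) -> riesz f = y.
Proof.
move=> fy; rewrite /riesz (_ : \row_k f (ev R k) = y *m G) ?(mulmxK G_unit) //.
by apply/rowP => k; rewrite mxE fy ip_ev.
Qed.

Lemma ftrace_adjoint A B : linear A -> linear B ->
  (forall x y, ip G (A x) y = ip G x (B y)) -> ftrace A = ftrace B.
Proof.
move=> linA linB AB.
transitivity (ftrace (fun x => B (x *m invmx G) *m G)).
  by apply: eq_bigr => i _; rewrite -ip_dual AB ipC ip_ev.
rewrite (ftrace_comm (A := mulmxr G) (B := fun x => B (x *m invmx G))).
- by apply: eq_bigr => i _; rewrite /= (mulmxK G_unit).
- exact: linearP.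
- by move=> a x y; rewrite /= mulmxDl -scalemxAl linB.
Qed.

End Gram.

Section ModifiedHType.
Variables (R : realFieldType) (n p m : nat) (G : 'M[R]_n)
  (br : 'rV[R]_n -> 'rV[R]_n -> 'rV[R]_n) (phi : 'rV[R]_n -> R)
  (j : 'rV[R]_n -> 'rV[R]_n -> 'rV[R]_n)
  (zb : 'I_p -> 'rV[R]_n) (vb : 'I_m -> 'rV[R]_n).
Hypotheses (G_sym : G^T = G) (G_unit : G \in unitmx).
Hypothesis br_linear : forall (a : R) x y w, br (a *: x + y) w = a *: br x w + br y w.
Hypothesis br_anti : forall x y, br x y = - br y x.
Hypothesis br_nil : forall x y w, br (br x y) w = 0.
Hypothesis center_nondeg :
  forall z, center br z -> (forall z', center br z' -> ip G z z' = 0) -> z = 0.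
Hypothesis j_def : forall z x, center br z -> in_v G br x ->
  in_v G br (j z x) /\ (forall y, in_v G br y -> ip G (br x y) z = ip G y (j z x)).
Hypothesis phi_quad : exists Q : 'M[R]_n, forall z, center br z -> phi z = (z *m Q *m z^T) 0 0.
Hypothesis j_Htype : forall z x, center br z -> in_v G br x -> j z (j z x) = - phi z *: x.
Hypothesis zb_center : forall k, center br (zb k).
Hypothesis zb_orth : forall k l, k != l -> ip G (zb k) (zb l) = 0.
Hypothesis zb_unit : forall k, ip G (zb k) (zb k) = 1 \/ ip G (zb k) (zb k) = -1.
Hypothesis zb_span : forall z, center br z -> exists c : 'I_p -> R, z = \sum_k c k *: zb k.
Hypothesis vb_in_v : forall k, in_v G br (vb k).
Hypothesis vb_free : forall c : 'I_m -> R, \sum_k c k *: vb k = 0 -> forall k, c k = 0.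
Hypothesis vb_span : forall x, in_v G br x -> exists c : 'I_m -> R, x = \sum_k c k *: vb k.

Local Notation center := (center br).
Local Notation in_v := (in_v G br).
Implicit Types x y t u w z c : 'rV[R]_n.

Lemma br_is_bilinear : (forall w, linear (br^~ w)) * (forall w, linear (br w)).
Proof.
split=> w a x y; first exact: br_linear.
by rewrite br_anti br_linear (br_anti x) (br_anti y) scalerN opprD !opprK.
Qed.

HB.instance Definition _ := bilinear_isBilinear.Build R _ _ _ _ _ br br_is_bilinear.

Lemma center_br x y : center (br x y).
Proof. by move=> w; rewrite br_nil. Qed.

Lemma br_center_r c y : center c -> br y c = 0.
Proof. by move=> cc; rewrite br_anti cc oppr0. Qed.

Lemma centerD c c' : center c -> center c' -> center (c + c').
Proof. by move=> cc cc' y; rewrite linearDl /= cc cc' addr0. Qed.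

Lemma in_v0 : in_v 0.
Proof. by move=> c _; rewrite linear0l. Qed.

Definition zsgn k := ip G (zb k) (zb k).

Lemma zsgn_sq k : zsgn k * zsgn k = 1.
Proof. by rewrite /zsgn; case: (zb_unit k) => ->; rewrite ?mulrNN mulr1. Qed.

Definition zproj w := \sum_k (zsgn k * ip G w (zb k)) *: zb k.
Definition vproj w := w - zproj w.

Lemma vproj_add_zproj w : vproj w + zproj w = w.
Proof. exact: subrK. Qed.

Lemma zproj_is_linear : linear zproj.
Proof.
move=> a x y; rewrite /zproj scaler_sumr -big_split; apply: eq_bigr => k _ /=.
by rewrite linearPl mulrDr scalerDl scalerA mulrCA.
Qed.

Lemma vproj_is_linear : linear vproj.
Proof. by move=> a x y; rewrite /vproj zproj_is_linear scalerBr opprD addrACA. Qed.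

Lemma center_zproj w : center (zproj w).
Proof.
move=> y; rewrite /zproj linear_sumlz big1 // => k _.
by rewrite linearZl_LR /= zb_center scaler0.
Qed.

Lemma ip_zproj_zb w l : ip G (zproj w) (zb l) = ip G w (zb l).
Proof.
rewrite /zproj linear_sumlz (bigD1 l) //= big1 ?addr0 => [|k kl].
  by rewrite linearZl_LR /= -/(zsgn l) mulrAC zsgn_sq mul1r.
by rewrite linearZl_LR /= zb_orth // mulr0.
Qed.

Lemma ip_zb_center x c : (forall l, ip G x (zb l) = 0) -> center c -> ip G x c = 0.
Proof.
move=> x_zb /zb_span [cz ->]; rewrite linear_sumr big1 // => k _.
by rewrite linearZr_LR /= x_zb mulr0.
Qed.

Lemma in_v_vproj w : in_v (vproj w).
Proof. by move=> c; apply: ip_zb_center => l; rewrite linearBl /= ip_zproj_zb subrr. Qed.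

Lemma zproj_center c : center c -> zproj c = c.
Proof.
move=> cc; apply/eqP; rewrite eq_sym -subr_eq0; apply/eqP; apply: center_nondeg.
  by move=> y; rewrite linearBl /= cc center_zproj subrr.
by move=> c' cc'; exact: (in_v_vproj c).
Qed.

Lemma zproj_v x : in_v x -> zproj x = 0.
Proof. by move=> vx; rewrite /zproj big1 // => k _; rewrite vx // mulr0 scale0r. Qed.

Lemma vproj_v x : in_v x -> vproj x = x.
Proof. by move=> vx; rewrite /vproj zproj_v // subr0. Qed.

Lemma ip_vproj_zproj x t : ip G x t = ip G x (vproj t) + ip G x (zproj t).
Proof. by rewrite /vproj linearBr /= subrK. Qed.

Lemma in_v_nondeg x y : in_v x -> in_v y ->
  (forall t, in_v t -> ip G x t = ip G y t) -> x = y.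
Proof.
move=> vx vy xy; apply: (ip_nondeg G_unit) => t.
rewrite (ip_vproj_zproj x) (ip_vproj_zproj y) (xy _ (in_v_vproj t)).
by rewrite (vx _ (center_zproj t)) (vy _ (center_zproj t)).
Qed.

(* [jext c u] is j(c_z) u_v, defined by Riesz duality from ad_u so that it is bilinear on
   all of n; it is locked so that [mxE] cannot unfold it. *)
Fact jext_key : unit. Proof. exact: tt. Qed.
Definition jext := locked_with jext_key (fun c u => riesz G (fun t => ip G (br u t) c)).

Lemma ip_jext c u t : ip G (jext c u) t = ip G (br u t) c.
Proof.
by rewrite [jext]unlock; apply: (ip_riesz G_unit) => a x y; rewrite linearPr /= linearPl.
Qed.

Lemma jext_is_bilinear : (forall u, linear (jext^~ u)) * (forall c, linear (jext c)).
Proof.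
split=> w a x y; apply: (ip_nondeg G_unit) => t; rewrite linearPl /= !ip_jext.
  by rewrite linearPr.
by rewrite linearPl /= linearPl.
Qed.

HB.instance Definition _ := bilinear_isBilinear.Build R _ _ _ _ _ jext jext_is_bilinear.

Lemma ip_br_jext u t c : ip G (br u t) c = ip G t (jext c u).
Proof. by rewrite [RHS]ipC // ip_jext. Qed.

Lemma jext_skew c u t : ip G (jext c u) t = - ip G u (jext c t).
Proof. by rewrite ip_jext -ip_br_jext br_anti linearNl. Qed.

Lemma jext_center_r c u : center u -> jext c u = 0.
Proof. by move=> cu; apply: (ip_nondeg G_unit) => t; rewrite ip_jext cu !linear0l. Qed.

Lemma jext_v_l x u : in_v x -> jext x u = 0.
Proof.
move=> vx; apply: (ip_nondeg G_unit) => t.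
by rewrite ip_jext ipC // (vx _ (center_br u t)) linear0l.
Qed.

Lemma in_v_jext c u : in_v (jext c u).
Proof. by move=> c' cc'; rewrite ip_jext br_center_r // linear0l. Qed.

Lemma jext_zproj_l c u : jext (zproj c) u = jext c u.
Proof.
by rewrite -{2}(vproj_add_zproj c) [RHS]linearDl /= (jext_v_l _ (in_v_vproj c)) add0r.
Qed.

Lemma jext_vproj_r c u : jext c (vproj u) = jext c u.
Proof.
by rewrite -{2}(vproj_add_zproj u) [RHS]linearDr /= (jext_center_r _ (center_zproj u)) addr0.
Qed.

Lemma jext_j z x : center z -> in_v x -> jext z x = j z x.
Proof.
move=> cz vx; have [vjx ipj] := j_def cz vx.
apply: in_v_nondeg => // [|t vt]; first exact: in_v_jext.
by rewrite ip_jext ipj // ipC.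
Qed.

Lemma jext_sq c u : jext c (jext c u) = - phi (zproj c) *: vproj u.
Proof.
have [cc vu] := (center_zproj c, in_v_vproj u).
have Ju : jext c u = j (zproj c) (vproj u) by rewrite -jext_zproj_l -jext_vproj_r jext_j.
rewrite -jext_zproj_l Ju jext_j //; last exact: (j_def cc vu).1.
exact: j_Htype.
Qed.

Lemma jext_anti z z' u : center z -> center z' ->
  jext z (jext z' u) + jext z' (jext z u) = - (2%:R * polar phi z z') *: vproj u.
Proof.
move=> cz cz'; have czz := centerD cz cz'; have := jext_sq (z + z') u.
rewrite !linearDl !linearDr /= !jext_sq !zproj_center //.
rewrite (addrC (- phi z *: _)) addrACA => /(canRL (addrK _)) ->.
by rewrite -!scalerDl -scalerBl /polar; congr (_ *: _); field.
Qed.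

Lemma LCE u w : LC G br u w = 2%:R^-1 *: (br u w - jext u w - jext w u).
Proof.
apply: (riesz_ip G_unit) => t.
rewrite /koszul linearZl_LR /= !linearBl /= !ip_jext (br_anti t u) linearNl /=.
by rewrite mulrC.
Qed.

Lemma br_br_r x y w : br w (br x y) = 0.
Proof. exact/br_center_r/center_br. Qed.

Lemma jext_jext_l x y u : jext (jext x y) u = 0.
Proof. exact/jext_v_l/in_v_jext. Qed.

Lemma jext_br_r x y u : jext u (br x y) = 0.
Proof. exact/jext_center_r/center_br. Qed.

Lemma curv_coord a b c i : (curv G br a b c) 0 i =
  2%:R^-1 * 2%:R^-1 * (- (br a (jext b c)) 0 i - (br a (jext c b)) 0 i
    + (jext a (jext b c)) 0 i + (jext a (jext c b)) 0 i - (jext (br b c) a) 0 i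
    + (br b (jext a c)) 0 i + (br b (jext c a)) 0 i - (jext b (jext a c)) 0 i
    - (jext b (jext c a)) 0 i + (jext (br a c) b) 0 i)
  + 2%:R^-1 * (jext (br a b) c) 0 i.
Proof.
rewrite /curv !LCE !(linearZl_LR, linearZr_LR, linearBl, linearBr) /=.
rewrite !(br_nil, br_br_r, jext_jext_l, jext_br_r) !mxE.
ring.
Qed.

Lemma ric_expand b c : ric G br b c =
  2%:R^-1 * 2%:R^-1 * (- ftrace (fun a => br a (jext b c)) - ftrace (fun a => br a (jext c b))
    + ftrace (fun a => jext a (jext b c)) + ftrace (fun a => jext a (jext c b))
    - ftrace (fun a => jext (br b c) a) + ftrace (fun a => br b (jext a c))
    + ftrace (fun a => br b (jext c a)) - ftrace (fun a => jext b (jext a c))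
    - ftrace (fun a => jext b (jext c a)) + ftrace (fun a => jext (br a c) b))
  + 2%:R^-1 * ftrace (fun a => jext (br a b) c).
Proof.
rewrite /ric; under eq_bigr => i _ do rewrite curv_coord.
by rewrite big_split /= -!mulr_sumr !(big_split, sumrN, sumrB).
Qed.

Lemma ftrace_center F : linear F -> (forall w, center (F w)) ->
  ftrace F = \sum_k zsgn k * ip G (F (zb k)) (zb k).
Proof.
move=> linF cF.
have -> : ftrace F = ftrace (zproj \o F) by apply: eq_bigr => i _; rewrite /= zproj_center.
rewrite ftrace_comm //; last exact: zproj_is_linear.
rewrite /ftrace; under eq_bigr => i _ do rewrite /= linear_combination_of // summxE.
rewrite exchange_big; apply: eq_bigr => k _ /=.
rewrite (ip_coord G (F (zb k))) mulr_sumr; apply: eq_bigr => i _.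
by rewrite mxE (ipC G_sym (ev R i)); ring.
Qed.

Lemma ftrace_center_eq0 F : linear F -> (forall w, center (F w)) ->
  (forall k, F (zb k) = 0) -> ftrace F = 0.
Proof.
move=> linF cF Fz; rewrite ftrace_center // big1 // => k _.
by rewrite Fz linear0l mulr0.
Qed.

Definition jform b c := \sum_k zsgn k * ip G (jext (zb k) b) (jext (zb k) c).

Lemma ftrace_br_l u : ftrace (fun a => br a u) = 0.
Proof.
apply: ftrace_center_eq0 => [a x y|w|k]; first exact: br_linear.
  exact: center_br.
exact: zb_center.
Qed.

Lemma ftrace_br_r u : ftrace (br u) = 0.
Proof.
apply: ftrace_center_eq0 => [a x y|w|k]; first exact: linearPr.
  exact: center_br.
exact/br_center_r/zb_center.
Qed.

Lemma ftrace_jext_l u : ftrace (fun a => jext a u) = 0.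
Proof.
rewrite -(ftrace_br_r u); apply: (ftrace_adjoint G_sym G_unit) => [a x y|a x y|x y].
- exact: linearPl.
- exact: linearPr.
- by rewrite ip_jext ipC.
Qed.

Lemma ftrace_jext_r c : ftrace (jext c) = 0.
Proof.
have skew : ftrace (jext c) = - ftrace (jext c).
  rewrite -ftraceN; apply: (ftrace_adjoint G_sym G_unit) => [a x y|a x y|x y].
  - exact: linearPr.
  - by rewrite linearPr /= scalerN opprD.
  - by rewrite jext_skew linearNr.
by apply/eqP; rewrite -eqNr -skew.
Qed.

Lemma ftrace_br_jext_l b c : ftrace (fun a => br b (jext a c)) = jform c b.
Proof.
rewrite ftrace_center => [|a x y|w]; last exact: center_br.
  by apply: eq_bigr => k _; rewrite ip_br_jext.
by rewrite /= linearPl /= linearPr.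
Qed.

Lemma ftrace_br_jext_r b c : ftrace (fun a => br b (jext c a)) = 0.
Proof.
apply: ftrace_center_eq0 => [a x y|w|k]; first by rewrite /= linearPr /= linearPr.
  exact: center_br.
by rewrite (jext_center_r _ (zb_center k)) linear0r.
Qed.

Lemma ftrace_jext_jext_l b c : ftrace (fun a => jext b (jext a c)) = 0.
Proof.
have adj x y : ip G (jext b (jext x c)) y = ip G x (br (jext b y) c).
  by rewrite jext_skew ip_jext br_anti linearNl opprK ipC.
rewrite (ftrace_adjoint G_sym G_unit _ _ adj) => [|a x y|a x y].
- apply: ftrace_center_eq0 => [a x y|w|k]; first by rewrite /= linearPr /= linearPl.
    exact: center_br.
  by rewrite (jext_center_r _ (zb_center k)) linear0l.
- by rewrite /= linearPl /= linearPr.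
- by rewrite /= linearPr /= linearPl.
Qed.

Lemma ftrace_jext_br b c : ftrace (fun a => jext (br a c) b) = - jform b c.
Proof.
have adj x y : ip G (jext (br x c) b) y = ip G x (jext (br y b) c).
  rewrite ip_jext -ip_br_jext ipC // (br_anti b) (br_anti x).
  by rewrite linearNl /= linearNr /= opprK.
rewrite (ftrace_adjoint G_sym G_unit _ _ adj) => [|a x y|a x y]; last 2 first.
- by rewrite /= linearPl /= linearPl.
- by rewrite /= linearPl /= linearPl.
rewrite (ftrace_comm (A := fun w => jext w c) (B := fun y => br y b)) => [|a x y|a x y].
- rewrite /= ftrace_center => [|a x y|w]; last exact: center_br.
    rewrite /jform -sumrN; apply: eq_bigr => k _.
    by rewrite ip_br_jext ipC // jext_skew ipC // mulrN.
  by rewrite /= linearPl /= linearPl.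
- exact: linearPl.
- exact: linearPl.
Qed.

Lemma jformC b c : jform b c = jform c b.
Proof. by apply: eq_bigr => k _; rewrite ipC. Qed.

Lemma ric_formula b c : ric G br b c =
  - (2%:R^-1 * 2%:R^-1) * ftrace (fun a => jext b (jext c a)) - 2%:R^-1 * jform b c.
Proof.
rewrite ric_expand !ftrace_br_l !ftrace_jext_l ftrace_jext_r ftrace_br_jext_l.
rewrite ftrace_br_jext_r ftrace_jext_jext_l !ftrace_jext_br (jformC c b).
ring.
Qed.

Lemma ftrace_jext_center z z' : center z -> center z' ->
  ftrace (fun a => jext z (jext z' a)) = - (m%:R * polar phi z z').
Proof.
move=> cz cz'.
have trv : ftrace vproj = m%:R.
  apply: (ftrace_proj vproj_is_linear vb_free) => [k|x]; first exact/vproj_v/vb_in_v.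
  exact/vb_span/in_v_vproj.
have sym : ftrace (fun a => jext z (jext z' a)) = ftrace (fun a => jext z' (jext z a)).
  by apply: ftrace_comm => a x y; rewrite linearPr.
have : ftrace (fun a => jext z (jext z' a)) + ftrace (fun a => jext z' (jext z a)) =
    - (2%:R * polar phi z z') * m%:R.
  by rewrite -ftraceD -trv -ftraceZ; apply: eq_bigr => i _; rewrite jext_anti.
rewrite -sym => twice; apply: (@mulfI _ 2%:R); first by rewrite pnatr_eq0.
by rewrite mulr_natl mulr2n twice; ring.
Qed.

Lemma jform_v x t : in_v x -> jform x t = (\sum_k zsgn k * phi (zb k)) * ip G x t.
Proof.
move=> vx; rewrite /jform mulr_suml; apply: eq_bigr => k _.
rewrite -[ip G (jext _ x) _]opprK -jext_skew jext_sq zproj_center // vproj_v //.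
by rewrite linearZl_LR /=; ring.
Qed.

Lemma jform_center z t : center z -> jform z t = 0.
Proof.
by move=> cz; rewrite /jform big1 // => k _; rewrite jext_center_r // linear0l mulr0.
Qed.

Lemma ric_v x t : in_v x ->
  ric G br x t = - ((\sum_k zsgn k * phi (zb k)) / 2%:R) * ip G x t.
Proof.
move=> vx; rewrite ric_formula jform_v // /ftrace big1 => [|i _]; last first.
  by rewrite jext_v_l // mxE.
ring.
Qed.

Lemma ric_center z t : center z -> ric G br z t = m%:R / 4%:R * polar phi z (zproj t).
Proof.
move=> cz; rewrite ric_formula jform_center //.
have -> : ftrace (fun a => jext z (jext t a)) = ftrace (fun a => jext z (jext (zproj t) a)).
  by apply: eq_bigr => i _; rewrite jext_zproj_l.
by rewrite (ftrace_jext_center cz (center_zproj t)); field.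
Qed.

Lemma polar_zproj_scalar z : center z -> scalar (fun t => polar phi z (zproj t)).
Proof.
move=> cz; have [Q phiQ] := phi_quad.
have polarQ t : polar phi z (zproj t) =
    ((z *m Q *m (zproj t)^T) 0 0 + (zproj t *m Q *m z^T) 0 0) / 2%:R.
  have [czt czzt] := (center_zproj t, centerD cz (center_zproj t)).
  rewrite /polar !phiQ // linearD /= !(mulmxDl, mulmxDr) !mxE.
  by field.
move=> a x y; rewrite !polarQ zproj_is_linear linearP /= !(mulmxDl, mulmxDr).
rewrite -!(scalemxAl, scalemxAr) !mxE.
by field.
Qed.

Lemma Rc_v x : in_v x -> Rc G br x = - ((\sum_k zsgn k * phi (zb k)) / 2%:R) *: x.
Proof. by move=> vx; apply: (riesz_ip G_unit) => t; rewrite ric_v // linearZl_LR. Qed.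

Lemma ip_Rc_center z t : center z ->
  ip G (Rc G br z) t = m%:R / 4%:R * polar phi z (zproj t).
Proof.
move=> cz; have ric_scalar : scalar (ric G br z).
  by move=> a x y; rewrite !ric_center // polar_zproj_scalar //; ring.
by rewrite (ip_riesz G_unit _ ric_scalar) ric_center.
Qed.

Lemma Rc_center z : center z -> center (Rc G br z) /\
  (forall z', center z' -> ip G (Rc G br z) z' = m%:R / 4%:R * polar phi z z').
Proof.
move=> cz; split=> [|z' cz']; last by rewrite ip_Rc_center // zproj_center.
suff vRc : vproj (Rc G br z) = 0.
  by rewrite -(vproj_add_zproj (Rc G br z)) vRc add0r; exact: center_zproj.
apply: in_v_nondeg => [||t vt]; [exact: in_v_vproj | exact: in_v0 |].
have Rc_v0 : ip G (Rc G br z) t = ip G (Rc G br z) 0.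
  by rewrite !ip_Rc_center // (zproj_v vt) (zproj_v in_v0).
rewrite linear0l /vproj linearBl /= Rc_v0 linear0r sub0r.
by rewrite ipC // (vt _ (center_zproj _)) oppr0.
Qed.

End ModifiedHType.

Theorem theorem3p5 (R : realFieldType) (n p m : nat) (G : 'M[R]_n)
  (br : 'rV[R]_n -> 'rV[R]_n -> 'rV[R]_n) (phi : 'rV[R]_n -> R)
  (j : 'rV[R]_n -> 'rV[R]_n -> 'rV[R]_n)
  (zb : 'I_p -> 'rV[R]_n) (vb : 'I_m -> 'rV[R]_n) :
  (* nondegenerate symmetric metric *)
  G^T = G -> G \in unitmx ->
  (* Lie bracket: bilinear, antisymmetric, 2-step nilpotent (non-abelian) *)
  (forall (a : R) x y w, br (a *: x + y) w = a *: br x w + br y w) ->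
  (forall x y, br x y = - br y x) ->
  (forall x y w, br (br x y) w = 0) ->
  (exists x y, br x y != 0) ->
  (* the center is nondegenerate *)
  (forall z, center br z -> (forall z', center br z' -> ip G z z' = 0) -> z = 0) ->
  (* j(z) : v -> v defined by <[x,y],z> = <y, j(z) x> for x, y in v *)
  (forall z x, center br z -> in_v G br x ->
     in_v G br (j z x) /\ (forall y, in_v G br y -> ip G (br x y) z = ip G y (j z x))) ->
  (* phi is a quadratic form on z *)
  (exists Q : 'M[R]_n, forall z, center br z -> phi z = (z *m Q *m z^T) 0 0) ->
  (* modified H-type condition: j(z)^2 = - phi(z) Id_v *)
  (forall z x, center br z -> in_v G br x -> j z (j z x) = - phi z *: x) ->
  (* zb : pseudo-orthonormal basis of z *)
  (forall k, center br (zb k)) ->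
  (forall k l, k != l -> ip G (zb k) (zb l) = 0) ->
  (forall k, ip G (zb k) (zb k) = 1 \/ ip G (zb k) (zb k) = -1) ->
  (forall z, center br z -> exists c : 'I_p -> R, z = \sum_k c k *: zb k) ->
  (* vb : basis of v, so m = dim v *)
  (forall k, in_v G br (vb k)) ->
  (forall c : 'I_m -> R, \sum_k c k *: vb k = 0 -> forall k, c k = 0) ->
  (forall x, in_v G br x -> exists c : 'I_m -> R, x = \sum_k c k *: vb k) ->
  let xi := \sum_k ip G (zb k) (zb k) * phi (zb k) in
  (* Rc|_v = -xi/2 Id_v (in particular Rc preserves v) *)
  (forall x, in_v G br x -> Rc G br x = - (xi / 2%:R) *: x) /\
  (* Rc preserves z and Rc|_z = m/4 Id^dagger_phi *)
  (forall z, center br z ->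
     center br (Rc G br z) /\
     (forall z', center br z' -> ip G (Rc G br z) z' = (m%:R / 4%:R) * polar phi z z')).
Proof.
move=> G_sym G_unit br_linear br_anti br_nil _ center_nondeg j_def phi_quad j_Htype
  zb_center zb_orth zb_unit zb_span vb_in_v vb_free vb_span xi.
split=> [x vx | z cz].
  exact: (Rc_v G_sym G_unit br_linear br_anti br_nil center_nondeg j_def j_Htype
    zb_center zb_orth zb_unit zb_span vx).
exact: (Rc_center G_sym G_unit br_linear br_anti br_nil center_nondeg j_def phi_quad
  j_Htype zb_center zb_orth zb_unit zb_span vb_in_v vb_free vb_span cz).
Qed.
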